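(* Let $n=2m+1\ge3$, $I\subset\{0,\dots,m\}$ nonempty, $d\in\mathbb Z$, and let $(v_i)_{i\in n\mathbb Z\pm I}$ be a $d$-face of type $I$ with associated vectors $\mu_i=v_i-\omega_i$. Then for every $i\in I$, $d\le\mu_i(j)+\mu_i(j^* )\le d+1$ for all $j\in A_i$, and $d-1\le\mu_i(j)+\mu_i(j^* )\le d$ for all $j\in B_i$, where $j^*=n+1-j$, $A_i=\{1,2,\dots,i\}\cup\{i^*,i^*+1,\dots,n\}$ and $B_i=\{i+1,i+2,\dots,n-i\}$.
   Context: For $v\in\mathbb Z^n$ write $v(j)$ for its $j$-th entry, $\Sigma v$ for the sum of its entries, $v^*$ for the vector with $v^*(j)=v(n+1-j)$, $\mathbf d=(d,\dots,d)$, and $v\ge w$ if $v(j)\ge w(j)$ for all $j$. The index set $n\mathbb Z\pm I$ is the set of integers congruent mod $n$ to an element of $I\cup(-I)$. A $d$-face of type $I$ is a family $(v_i)_{i\in n\mathbb Z\pm I}$ of vectors in $\mathbb Z^n$ with: (F1) $v_{i+n}=v_i-\mathbf 1$; (F2) $v_i\ge v_j$ whenever $i\le j$; (F3) $\Sigma v_i-\Sigma v_j=j-i$; (F4) $v_i+v_{-i}^*=\mathbf d$, for all indices $i,j$ in $n\mathbb Z\pm I$. For $i=nb+c$ with $b\in\mathbb Z$, $0\le c<n$, $\omega_i=((-1)^{(c)},0^{(n-c)})-\mathbf b$, where $(x^{(p)},y^{(q)})$ denotes $x$ repeated $p$ times followed by $y$ repeated $q$ times. *)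

From HB Require Import structures.
From mathcomp Require Import all_boot all_order all_algebra.
Set Implicit Arguments. Unset Strict Implicit. Unset Printing Implicit Defensive.
Import Order.TTheory GRing.Theory Num.Theory.
Local Open Scope ring_scope.

(* Vectors in Z^n are functions 'I_n -> int; the paper's 1-based entry v(j)
   (1 <= j <= n) is  v (j-1)  here.  The reversal v^* is v \o rev_ord. *)
Definition vec (n : nat) := 'I_n -> int.

Definition vsum n (v : vec n) : int := \sum_(j < n) v j.

Definition in_idx (n : nat) (I : pred nat) (i : int) : Prop :=
  exists k : nat, I k /\ ((i - k%:Z)%Z %% n%:Z = 0 \/ (i + k%:Z)%Z %% n%:Z = 0)%Z.

Definition is_face (n : nat) (I : pred nat) (d : int) (v : int -> vec n) : Prop :=
  (* F1 *) (forall i, in_idx n I i -> forall j, v (i + n%:Z) j = v i j - 1) /\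
  (* F2 *) (forall i k, in_idx n I i -> in_idx n I k -> i <= k ->
              forall j, v k j <= v i j) /\
  (* F3 *) (forall i k, in_idx n I i -> in_idx n I k -> vsum (v i) - vsum (v k) = k - i) /\
  (* F4 *) (forall i, in_idx n I i -> forall j, v i j + v (- i) (rev_ord j) = d).

(* omega_i for i = n b + c, 0 <= c < n:  ((-1)^(c), 0^(n-c)) - (b,...,b) *)
Definition omega (n : nat) (i : int) : vec n :=
  fun j => (if (j%:Z < (i %% n%:Z)%Z) then -1 else 0) - (i %/ n%:Z)%Z.

Definition mu (n : nat) (v : int -> vec n) (i : int) : vec n :=
  fun j => v i j - @omega n i j.

From HB Require Import structures.
From mathcomp Require Import all_boot all_order all_algebra.
From mathcomp Require Import zify.
Set Implicit Arguments. Unset Strict Implicit. Unset Printing Implicit Defensive.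
Import Order.TTheory GRing.Theory Num.Theory.
Local Open Scope ring_scope.

(* For 0 <= i <= n/2 the indices -i <= i <= n - i all lie in nZ +- I, so
   (F1) and (F2) squeeze v_{-i} between v_i and v_i + 1; with (F4) this gives
   d - 1 <= v_i(j) + v_i(j^* ) <= d.  Since omega_i = (-1^(i), 0^(n-i)), the
   correction omega_i(j) + omega_i(j^* ) is -1 on A_i and 0 on B_i. *)

Lemma in_idxN (n : nat) (I : pred nat) (i : int) :
  in_idx n I i -> in_idx n I (- i).
Proof.
case=> k [Ik Hk]; exists k; split => //.
rewrite -opprD (_ : - i + k%:Z = - (i - k%:Z)); last by rewrite opprB addrC.
by case: Hk => /dvdz_mod0P Hk; [right | left]; apply/dvdz_mod0P; rewrite dvdzE abszN.
Qed.

Lemma in_idxDn (n : nat) (I : pred nat) (i : int) :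
  in_idx n I i -> in_idx n I (i + n%:Z).
Proof.
case=> k [Ik Hk]; exists k; split => //.
by rewrite addrAC [i + n%:Z + k%:Z]addrAC !modzDr.
Qed.

Lemma in_idx_nat (n : nat) (I : pred nat) (k : nat) : I k -> in_idx n I k%:Z.
Proof. by exists k; split => //; left; rewrite subrr mod0z. Qed.

Lemma omega_small (n i : nat) (j : 'I_n) :
  (i < n)%N -> omega i%:Z j = if (j < i)%N then -1 else 0.
Proof.
move=> lt_in; rewrite /omega modz_small ?divz_small ?subr0 ?ltz_nat //; lia.
Qed.

Lemma omega_add_rev (n i : nat) (j : 'I_n) : (i.*2 < n)%N ->
  omega i%:Z j + omega i%:Z (rev_ord j) =
  if (j < i)%N || (n - i <= j)%N then -1 else 0.
Proof.
move=> lt_2in; have lt_in : (i < n)%N by lia.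
rewrite !omega_small //= (_ : (n - j.+1 < i)%N = (n - i <= j)%N); last first.
  by move: (ltn_ord j); lia.
have [lt_ji|] := ltnP j i; last by case: (n - i <= j)%N; rewrite ?addr0 ?add0r.
by rewrite (_ : (n - i <= j)%N = false) ?addr0 //; lia.
Qed.

Section Face.

Variables (n : nat) (I : pred nat) (d : int) (v : int -> vec n).
Hypothesis face : is_face I d v.

Lemma face_gap (i : int) (j : 'I_n) : in_idx n I i -> 0 <= i -> i <= n%:Z - i ->
  v i j <= v (- i) j <= v i j + 1.
Proof.
have [F1 [F2 _]] := face; move=> Ii ge0_i le_i_ni.
have IiN := in_idxN Ii; apply/andP; split; first by apply: F2 => //; lia.
rewrite -lerBlDr -F1 //; apply: F2 => //; [exact: in_idxDn | lia].
Qed.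

Lemma face_add_rev (i : int) (j : 'I_n) : in_idx n I i ->
  v i j + v i (rev_ord j) = d - (v (- i) j - v i j).
Proof.
have [_ [_ [_ F4]]] := face; move=> Ii.
by have := F4 i Ii (rev_ord j); rewrite rev_ordK; lia.
Qed.

Lemma face_add_rev_bounds (i : int) (j : 'I_n) :
  in_idx n I i -> 0 <= i -> i <= n%:Z - i ->
  d - 1 <= v i j + v i (rev_ord j) <= d.
Proof.
by move=> Ii ge0_i le_i_ni; have := face_gap j Ii ge0_i le_i_ni;
  rewrite face_add_rev //; lia.
Qed.

End Face.

Theorem lemma5p3p4 (m : nat) (I : pred nat) (d : int)
    (v : int -> vec (m.*2.+1)) :
  (1 <= m)%N ->
  (forall k, I k -> (k <= m)%N) ->
  (exists k, I k) ->
  is_face I d v ->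
  forall i : nat, I i ->
    (forall j : 'I_(m.*2.+1), ((j < i)%N || (m.*2.+1 - i <= j)%N) ->
       d <= mu v i%:Z j + mu v i%:Z (rev_ord j) <= d + 1) /\
    (forall j : 'I_(m.*2.+1), ((i <= j)%N && (j < m.*2.+1 - i)%N) ->
       d - 1 <= mu v i%:Z j + mu v i%:Z (rev_ord j) <= d).
Proof.
move=> _ le_Im _ face i Ii.
have lt_2in : (i.*2 < m.*2.+1)%N by have := le_Im i Ii; lia.
have v_bounds (j : 'I_(m.*2.+1)) : d - 1 <= v i j + v i (rev_ord j) <= d.
  by apply: face_add_rev_bounds (in_idx_nat _ Ii) _ _ => //; lia.
split=> j Hj; have := omega_add_rev j lt_2in; rewrite /mu.
- by rewrite Hj; have := v_bounds j; lia.
- by rewrite (_ : _ || _ = false); [have := v_bounds j; lia | lia].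
Qed.
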